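(* Let $H$ be a commutative monoid with identity $1_H$ and group of units $H^\times$. The following are equivalent: (a) $\mathcal{P}_{\mathrm{fin},1}(H)$ is UmF; (b) $H\setminus H^\times$ is a breakable subsemigroup of $H$, the group of units $H^\times$ has order $\le 2$, and $H$ is the trivial ideal extension of $H\setminus H^\times$ by $H^\times$.
   Context: For a monoid $H$, $\mathcal{P}_{\mathrm{fin},1}(H)$ denotes the set of all non-empty finite subsets of $H$ containing $1_H$; it is a monoid under setwise multiplication $XY=\{xy: x\in X, y\in Y\}$. Divisibility in a monoid $M$: $x\mid_M y$ iff $y\in MxM=\{uxv: u,v\in M\}$; $x,y$ are associated if each divides the other; $x$ properly divides $y$ if $x\mid_M y$ but $y\nmid_M x$. A unit-divisor is an element dividing $1_M$; otherwise it is a non-unit-divisor. An irreducible of $M$ is a non-unit-divisor $a$ such that $a\neq xy$ for all non-unit-divisors $x,y$ that both properly divide $a$. A factorization of $x\in M$ is a finite word $a_1\ast\cdots\ast a_n$ (possibly empty) over the set of irreducibles of $M$ with $a_1\cdots a_n=x$. For words $\mathfrak a,\mathfrak b$ over $M$, write $\mathfrak a\sqsubseteq\mathfrak b$ if $\mathfrak a$ is, up to replacing letters by associated elements, a subword (subsequence) of some permutation of $\mathfrak b$; $\mathfrak a,\mathfrak b$ are equivalent if $\mathfrak a\sqsubseteq\mathfrak b\sqsubseteq\mathfrak a$. A factorization $\mathfrak a$ of $x$ is minimal if there is no factorization $\mathfrak b$ of $x$ with $\mathfrak b\sqsubseteq\mathfrak a$ and $\mathfrak a\not\sqsubseteq\mathfrak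 b$. $M$ is UmF if every non-unit-divisor is a product of irreducibles and any two minimal factorizations of the same element are equivalent. A semigroup $S$ is breakable if $xy\in\{x,y\}$ for all $x,y\in S$. ''$H$ is the trivial ideal extension of $H\setminus H^\times$ by $H^\times$'' means $uy=yu=y$ for all $u\in H^\times$ and $y\in H\setminus H^\times$ (the operation on $H^\times\cup(H\setminus H^\times)$ extends those of the two disjoint semigroups by this rule). *)

From Stdlib Require Import List Permutation.
Import ListNotations.
Set Implicit Arguments.

Section MonoidFactorization.
Variables (T : Type) (P : T -> Prop) (mul : T -> T -> T) (e : T).

Definition mdivides (x y : T) : Prop :=
  exists u v, P u /\ P v /\ y = mul (mul u x) v.

Definition massociated (x y : T) : Prop := mdivides x y /\ mdivides y x.

Definition mproperly_divides (x y : T) : Prop := mdivides x y /\ ~ mdivides y x.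

Definition unit_divisor (x : T) : Prop := mdivides x e.

Definition mirreducible (a : T) : Prop :=
  P a /\ ~ unit_divisor a /\
  forall x y, P x -> P y -> ~ unit_divisor x -> ~ unit_divisor y ->
    mproperly_divides x a -> mproperly_divides y a -> a <> mul x y.

Definition wprod (w : list T) : T := fold_right mul e w.

Definition factorization (x : T) (w : list T) : Prop :=
  Forall mirreducible w /\ wprod w = x.

Inductive subword : list T -> list T -> Prop :=
| subword_nil : subword [] []
| subword_skip : forall x a b, subword a b -> subword a (x :: b)
| subword_take : forall x a b, subword a b -> subword (x :: a) (x :: b).

Definition wle (a b : list T) : Prop :=
  exists p c, Permutation b p /\ subword c p /\ Forall2 massociated a c.

Definition wequiv (a b : list T) : Prop := wle a b /\ wle b a.

Definition minimal_factorization (x : T) (a : list T) : Prop :=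
  factorization x a /\
  ~ (exists b, factorization x b /\ wle b a /\ ~ wle a b).

Definition UmF : Prop :=
  (forall x, P x -> ~ unit_divisor x -> exists w, factorization x w) /\
  (forall x a b, P x -> minimal_factorization x a -> minimal_factorization x b ->
     wequiv a b).

End MonoidFactorization.

Section FinSubsets.
Variables (H : Type) (mul : H -> H -> H) (one : H).

Definition finite_subset (X : H -> Prop) : Prop :=
  exists l : list H, forall x, X x -> In x l.

Definition Pfin1 (X : H -> Prop) : Prop := finite_subset X /\ X one.

Definition setmul (X Y : H -> Prop) : H -> Prop :=
  fun z => exists x y, X x /\ Y y /\ z = mul x y.

Definition set_one : H -> Prop := fun z => z = one.

Definition Pfin1_UmF : Prop := UmF Pfin1 setmul set_one.

Definition is_unit (u : H) : Prop := exists v, mul u v = one.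

Definition units_order_le2 : Prop :=
  exists l : list H, length l <= 2 /\ forall u, is_unit u -> In u l.

Definition nonunits_subsemigroup : Prop :=
  forall x y, ~ is_unit x -> ~ is_unit y -> ~ is_unit (mul x y).

Definition nonunits_breakable : Prop :=
  forall x y, ~ is_unit x -> ~ is_unit y -> mul x y = x \/ mul x y = y.

Definition trivial_ideal_extension : Prop :=
  forall u y, is_unit u -> ~ is_unit y -> mul u y = y /\ mul y u = y.

End FinSubsets.

From Stdlib Require Import PeanoNat List Permutation ListDec Lia.
From Stdlib Require Import Classical FunctionalExtensionality PropExtensionality.
Import ListNotations.
Set Implicit Arguments.

(* Both conditions are equivalent to: every product ab lies in {1, a, b}
   ([trivial_products]).  For (b) this is elementary unit arithmetic; note that
   the non-units of a commutative monoid always form a subsemigroup.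

   Under [trivial_products] the product of two sets containing 1 is their
   union.  Hence the irreducibles of P_fin,1(H) are the sets {1,x} with x <> 1,
   every factorization of X consists of the sets {1,x} with x in X \ {1}, and a
   minimal one repeats none of them, so minimal factorizations agree up to order.

   Conversely, each of the following identities exhibits two inequivalent
   minimal factorizations.  If c^2 is not in {1,c}, then either c^3 lies in
   {1,c,c^2} and {1,c}{1,c} = {1,c}{1,c^2}, or {1,c}{1,c}{1,c} = {1,c}{1,c^2}.
   If all squares c^2 lie in {1,c} but ab is not in {1,a,b}, then
   {1,a}{1,b} = {1,a,b}{1,ab}, where {1,a,b} is irreducible. *)

Definition trivial_products (H : Type) (mul : H -> H -> H) (one : H) : Prop :=
  forall a b, mul a b = one \/ mul a b = a \/ mul a b = b.

Section Subword.
Variable T : Type.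
Implicit Types a b c p : list T.

Lemma subword_refl a : subword a a.
Proof. induction a; [apply subword_nil | apply subword_take; assumption]. Qed.

Lemma subword_length a b : subword a b -> length a <= length b.
Proof. induction 1; simpl; lia. Qed.

Lemma subword_eq_length a b : subword a b -> length a = length b -> a = b.
Proof.
  induction 1 as [| x a b h _ | x a b _ IH]; simpl; intro hl.
  - reflexivity.
  - apply subword_length in h; lia.
  - f_equal; auto.
Qed.

Lemma subword_incl a b : subword a b -> incl a b.
Proof.
  induction 1.
  - apply incl_refl.
  - apply incl_tl; assumption.
  - apply incl_cons; [left; reflexivity | apply incl_tl; assumption].
Qed.

Lemma subword_remove l1 l2 (y : T) : subword (l1 ++ l2) (l1 ++ y :: l2).
Proof.
  induction l1; simpl; [apply subword_skip, subword_refl | apply subword_take; assumption].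
Qed.

Lemma subword_shorter c p : subword c p -> length c < length p ->
  exists p1 y p2, p = p1 ++ y :: p2 /\ subword c (p1 ++ p2).
Proof.
  induction 1 as [| x a b h _ | x a b _ IH]; simpl; intro hl.
  - lia.
  - exists [], x, b; auto.
  - destruct IH as (p1 & y & p2 & -> & h); [lia |].
    exists (x :: p1), y, p2; split; [reflexivity | apply subword_take, h].
Qed.
End Subword.

Lemma In_length_le2 {A : Type} {l : list A} {x y z : A} :
  length l <= 2 -> In x l -> In y l -> In z l -> x <> y -> z = x \/ z = y.
Proof.
  intros hl hx hy hz hxy.
  destruct l as [| p [| q [| r l]]]; simpl in *; try lia; intuition congruence.
Qed.

Section CommutativeMonoid.
Variables (H : Type) (mul : H -> H -> H) (one : H).
Hypothesis mulA : forall x y z, mul x (mul y z) = mul (mul x y) z.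
Hypothesis mulC : forall x y, mul x y = mul y x.
Hypothesis mul1 : forall x, mul one x = x.

Lemma mulr1 x : mul x one = x.
Proof. rewrite mulC; apply mul1. Qed.

Lemma is_unit_one : is_unit mul one one.
Proof. exists one; apply mul1. Qed.

Lemma is_unit_mul x y : is_unit mul one x -> is_unit mul one y -> is_unit mul one (mul x y).
Proof.
  intros [v hv] [w hw]. exists (mul w v).
  rewrite mulA, <- (mulA x y w), hw, mulr1; exact hv.
Qed.

Lemma is_unit_mul_l x y : is_unit mul one (mul x y) -> is_unit mul one x.
Proof. intros [w hw]. exists (mul y w). rewrite mulA; exact hw. Qed.

Lemma is_unit_cancel u x y : is_unit mul one u -> mul u x = mul u y -> x = y.
Proof.
  intros [v hv] e.
  rewrite <- (mul1 x), <- (mul1 y), <- hv, (mulC u v), <- !mulA, e.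
  reflexivity.
Qed.

Lemma nonunits_subsemigroup_comm : nonunits_subsemigroup mul one.
Proof. intros x y hx _ hxy. exact (hx (is_unit_mul_l hxy)). Qed.

Section TrivialProductsStructure.
Hypothesis triv : trivial_products mul one.

Lemma trivial_products_breakable : nonunits_breakable mul one.
Proof.
  intros x y hx _. destruct (triv x y) as [e | e]; auto.
  exfalso; apply hx; exists y; exact e.
Qed.

Lemma trivial_products_ideal_extension : trivial_ideal_extension mul one.
Proof.
  intros u y hu hy. rewrite (mulC y u).
  destruct (triv u y) as [e | [e | e]]; auto; exfalso; apply hy.
  - exists u; rewrite mulC; exact e.
  - replace y with one; [apply is_unit_one |].
    apply (is_unit_cancel hu). rewrite mulr1; symmetry; exact e.
Qed.

Lemma trivial_products_units_le2 : units_order_le2 mul one.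
Proof.
  destruct (classic (exists u, is_unit mul one u /\ u <> one)) as [[u [hu hu1]] | hn].
  - exists [one; u]; split; [simpl; lia |].
    assert (huu : mul u u = one).
    { destruct (triv u u) as [e | [e | e]]; auto; exfalso; apply hu1;
        apply (is_unit_cancel hu); rewrite mulr1; exact e. }
    intros w hw; simpl. destruct (triv u w) as [e | [e | e]].
    + right; left. apply (is_unit_cancel hu). congruence.
    + left; symmetry. apply (is_unit_cancel hu). rewrite mulr1; exact e.
    + exfalso; apply hu1. apply (is_unit_cancel hw). rewrite mulC, e, mulr1; reflexivity.
  - exists [one]; split; [simpl; lia |].
    intros w hw; left. apply NNPP; intro hw1. apply hn; exists w; split; auto.
Qed.
End TrivialProductsStructure.

Lemma trivial_products_of_structure :
  nonunits_breakable mul one -> units_order_le2 mul one -> trivial_ideal_extension mul one ->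
  trivial_products mul one.
Proof.
  intros hbr (l & hl & hu) htie a b.
  destruct (classic (is_unit mul one a)) as [ha | ha],
    (classic (is_unit mul one b)) as [hb | hb].
  - destruct (classic (a = one)) as [-> | ha1]; [right; right; apply mul1 |].
    destruct (In_length_le2 hl (hu one is_unit_one) (hu a ha) (hu _ (is_unit_mul ha hb))
      (not_eq_sym ha1)); auto.
  - right; right; apply (htie a b ha hb).
  - right; left; apply (htie b a hb ha).
  - destruct (hbr a b ha hb); auto.
Qed.

Local Notation PF := (Pfin1 one).
Local Infix "⋅" := (setmul mul) (at level 40, left associativity).
Local Notation S1 := (set_one one).
Local Notation product := (wprod (setmul mul) (set_one one)).
Local Notation divides := (mdivides PF (setmul mul)).
Local Notation properly_divides := (mproperly_divides PF (setmul mul)).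
Local Notation unit_div := (unit_divisor PF (setmul mul) S1).
Local Notation irreducible := (mirreducible PF (setmul mul) S1).
Local Notation is_factorization := (factorization PF (setmul mul) S1).
Local Notation is_minimal := (minimal_factorization PF (setmul mul) S1).
Local Notation "a ⊑ b" := (wle PF (setmul mul) a b) (at level 70).

Definition listset (l : list H) : H -> Prop := fun z => In z l.

Lemma set_ext (X Y : H -> Prop) : (forall z, X z <-> Y z) -> X = Y.
Proof.
  intro h. apply functional_extensionality; intro z.
  apply propositional_extensionality, h.
Qed.

Lemma Pfin1_listset l : PF (listset (one :: l)).
Proof. split; [exists (one :: l); auto | left; reflexivity]. Qed.

Lemma Pfin1_one : PF S1.
Proof. split; [exists [one]; intros z ->; left; reflexivity | reflexivity]. Qed.

Lemma Pfin1_setmul X Y : PF X -> PF Y -> PF (X ⋅ Y).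
Proof.
  intros [[lx hx] hx1] [[ly hy] hy1]. split.
  - exists (flat_map (fun x => map (mul x) ly) lx). intros z (x & y & hxz & hyz & ->).
    apply in_flat_map; exists x; split; auto. apply in_map; auto.
  - exists one, one. rewrite mul1; auto.
Qed.

Lemma Pfin1_product w : Forall PF w -> PF (product w).
Proof. induction 1; simpl; [apply Pfin1_one | apply Pfin1_setmul; assumption]. Qed.

Lemma setmul_listset l m :
  listset l ⋅ listset m = listset (flat_map (fun x => map (mul x) m) l).
Proof.
  apply set_ext; intro z; unfold listset. rewrite in_flat_map. split.
  - intros (x & y & hx & hy & ->). exists x; split; auto. apply in_map; exact hy.
  - intros (x & hx & hz). apply in_map_iff in hz as (y & <- & hy). exists x, y; auto.
Qed.

Lemma setmul_incl_l X Y z : Y one -> X z -> (X ⋅ Y) z.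
Proof. intros h1 hz. exists z, one. rewrite mulr1; auto. Qed.

Lemma setmul_incl_r X Y z : X one -> Y z -> (X ⋅ Y) z.
Proof. intros h1 hz. exists one, z. rewrite mul1; auto. Qed.

Lemma setmul_1l X : S1 ⋅ X = X.
Proof.
  apply set_ext; intro z; split.
  - intros (x & y & -> & hy & ->). rewrite mul1; exact hy.
  - apply setmul_incl_r; reflexivity.
Qed.

Lemma setmul_C X Y : X ⋅ Y = Y ⋅ X.
Proof.
  apply set_ext; intro z; split; intros (x & y & hx & hy & ->); exists y, x; auto.
Qed.

Lemma setmul_1r X : X ⋅ S1 = X.
Proof. rewrite setmul_C; apply setmul_1l. Qed.

Lemma setmul_A X Y Z : X ⋅ (Y ⋅ Z) = X ⋅ Y ⋅ Z.
Proof.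
  apply set_ext; intro z; split.
  - intros (x & w & hx & (y & u & hy & hu & ->) & ->).
    exists (mul x y), u. split; [exists x, y; auto | auto].
  - intros (w & u & (x & y & hx & hy & ->) & hu & ->).
    exists x, (mul y u). split; [auto | split; [exists y, u; auto | auto]].
Qed.

Lemma product_pair X Y : product [X; Y] = X ⋅ Y.
Proof. simpl. rewrite setmul_1r. reflexivity. Qed.

Lemma product_Permutation a b : Permutation a b -> product a = product b.
Proof.
  induction 1; simpl; try congruence.
  rewrite !setmul_A, (setmul_C y x). reflexivity.
Qed.

Lemma product_subword {c p z} :
  Forall (fun X => X one) p -> subword c p -> product c z -> product p z.
Proof.
  intros hp hs; revert z hp; induction hs as [| X c p _ IH | X c p _ IH];
    intros z hp hz; simpl in *; [exact hz | |]; inversion_clear hp as [| ? ? hX hp'].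
  - apply setmul_incl_r; auto.
  - destruct hz as (x & y & hx & hy & ->). exists x, y; auto.
Qed.

Lemma divides_incl X Y : divides X Y -> forall z, X z -> Y z.
Proof.
  intros (u & v & [_ hu] & [_ hv] & ->) z hz.
  apply setmul_incl_l; [exact hv | apply setmul_incl_r; assumption].
Qed.

Lemma divides_refl X : divides X X.
Proof.
  exists S1, S1. rewrite setmul_1l, setmul_1r.
  split; [apply Pfin1_one | split; [apply Pfin1_one | reflexivity]].
Qed.

Lemma Forall2_associated_iff a c : Forall2 (massociated PF (setmul mul)) a c <-> a = c.
Proof.
  split.
  - induction 1 as [| X Y a c [hXY hYX] _ IH]; [reflexivity |]. f_equal; [| exact IH].
    apply set_ext; intro z; split; apply divides_incl; assumption.
  - intros <-. induction a; constructor; [split; apply divides_refl | assumption].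
Qed.

(* Divisibility in P_fin,1(H) implies inclusion, so associated sets are equal
   and [wle] is the sub-multiset order. *)
Lemma wleE a b : a ⊑ b <-> exists p, Permutation b p /\ subword a p.
Proof.
  unfold wle. split.
  - intros (p & c & hp & hs & hac). apply Forall2_associated_iff in hac as <-. eauto.
  - intros (p & hp & hs). exists p, a. rewrite Forall2_associated_iff. auto.
Qed.

Lemma wle_length a b : a ⊑ b -> length a <= length b.
Proof.
  intros (p & hp & hs)%wleE. rewrite (Permutation_length hp). apply subword_length, hs.
Qed.

Lemma Permutation_wle a b : Permutation a b -> a ⊑ b.
Proof. intro h. apply wleE. exists a. split; [apply Permutation_sym, h | apply subword_refl]. Qed.

Lemma wle_eq_length a b : a ⊑ b -> length a = length b -> Permutation a b.
Proof.
  intros (p & hp & hs)%wleE hl.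
  rewrite (subword_eq_length hs) by (rewrite hl; apply Permutation_length, hp).
  apply Permutation_sym, hp.
Qed.

Lemma wle_shorter a b : a ⊑ b -> length a < length b ->
  exists b1 Y b2, b = b1 ++ Y :: b2 /\ a ⊑ b1 ++ b2.
Proof.
  intros (p & hp & hs)%wleE hl. rewrite (Permutation_length hp) in hl.
  destruct (subword_shorter hs hl) as (p1 & Y & p2 & -> & hs').
  destruct (in_split Y b) as (b1 & b2 & ->).
  { apply (Permutation_in Y (Permutation_sym hp)), in_elt. }
  exists b1, Y, b2. split; [reflexivity |]. apply wleE. exists (p1 ++ p2).
  split; [apply (Permutation_app_inv _ _ _ _ _ hp) | exact hs'].
Qed.

Lemma product_wle {a b z} :
  Forall (fun X => X one) b -> a ⊑ b -> product a z -> product b z.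
Proof.
  intros hb (p & hp & hs)%wleE hz.
  rewrite (product_Permutation hp). exact (product_subword (Permutation_Forall hp hb) hs hz).
Qed.

Lemma unit_divisor_one {X z} : unit_div X -> X z -> z = one.
Proof. intros h hz. exact (divides_incl h z hz). Qed.

Lemma nonunit_divisor_witness X : PF X -> ~ unit_div X -> exists z, X z /\ z <> one.
Proof.
  intros [_ h1] hX. apply NNPP; intro hn. apply hX.
  replace X with S1; [apply divides_refl |].
  apply set_ext; intro z; split; [intros ->; exact h1 |].
  intro hz. apply NNPP; intro hz1. apply hn; eauto.
Qed.

Lemma properly_divides_witness X Y :
  properly_divides X Y -> (forall z, X z -> Y z) /\ exists z, Y z /\ ~ X z.
Proof.
  intros [hXY hYX]. split; [exact (divides_incl hXY) |].
  apply NNPP; intro hn. apply hYX.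
  replace Y with X; [apply divides_refl |].
  apply set_ext; intro z; split; [apply (divides_incl hXY) |].
  intro hz; apply NNPP; intro hXz; apply hn; eauto.
Qed.

Lemma irreducible_one A : irreducible A -> A one.
Proof. intros [[_ h] _]; exact h. Qed.

Lemma irreducible_pair x : x <> one -> irreducible (listset [one; x]).
Proof.
  intro hx. split; [apply Pfin1_listset | split].
  - intro h. apply hx, (unit_divisor_one h). right; left; reflexivity.
  - intros X Y hX _ hnX _ hpX _ _.
    destruct (nonunit_divisor_witness hX hnX) as (z & hz & hz1).
    destruct (properly_divides_witness hpX) as [hsub (w & hw & hnw)].
    apply hnw. destruct hw as [<- | [<- | []]]; [exact (proj2 hX) |].
    destruct (hsub z hz) as [<- | [<- | []]]; [contradiction | exact hz].
Qed.

Lemma minimal_of_irredundant X a :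
  is_factorization X a ->
  (forall a1 Y a2, a = a1 ++ Y :: a2 -> exists z, X z /\ ~ product (a1 ++ a2) z) ->
  is_minimal X a.
Proof.
  intros [ha ea] hred. split; [split; assumption |].
  intros (b & [_ eb] & hle & hnle).
  destruct (Nat.lt_ge_cases (length b) (length a)) as [hl | hl].
  - destruct (wle_shorter hle hl) as (a1 & Y & a2 & -> & hle').
    destruct (hred a1 Y a2 eq_refl) as (z & hz & hnz).
    apply hnz. refine (product_wle _ hle' _); [| rewrite eb; exact hz].
    apply (incl_Forall (subword_incl (subword_remove a1 a2 Y))).
    exact (Forall_impl _ irreducible_one ha).
  - apply hnle, Permutation_wle, Permutation_sym, (wle_eq_length hle).
    apply wle_length in hle; lia.
Qed.

Lemma minimal_factorization2 A B :
  irreducible A -> irreducible B ->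
  (exists z, (A ⋅ B) z /\ ~ A z) -> (exists z, (A ⋅ B) z /\ ~ B z) ->
  is_minimal (A ⋅ B) [A; B].
Proof.
  intros hA hB hnA hnB. apply minimal_of_irredundant.
  - split; [repeat (apply Forall_cons; [assumption |]); apply Forall_nil | apply product_pair].
  - intros [| ? [| ? a1]] Y a2 e; simpl in e.
    + injection e as <- <-. simpl; rewrite setmul_1r. exact hnB.
    + injection e as <- <- <-. simpl; rewrite setmul_1r. exact hnA.
    + injection e as _ _ e. destruct a1; discriminate.
Qed.

Lemma minimal_factorization_repeat A n :
  irreducible A ->
  (exists z, product (repeat A (S n)) z /\ ~ product (repeat A n) z) ->
  is_minimal (product (repeat A (S n))) (repeat A (S n)).
Proof.
  intros hA hz. apply minimal_of_irredundant.
  - split; [| reflexivity].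
    apply Forall_forall; intros B hB. apply repeat_spec in hB as ->; exact hA.
  - intros a1 Y a2 e.
    assert (hl := f_equal (@length _) e).
    rewrite repeat_length, length_app in hl; simpl in hl.
    apply repeat_eq_elt in e as (_ & e1 & e2).
    rewrite <- e1, <- e2, <- repeat_app. replace (length a1 + length a2) with n by lia.
    exact hz.
Qed.

Section SetProductIsUnion.
Hypothesis triv : trivial_products mul one.

Lemma setmul_union X Y z : X one -> Y one -> ((X ⋅ Y) z <-> X z \/ Y z).
Proof.
  intros hX hY; split.
  - intros (x & y & hx & hy & ->). destruct (triv x y) as [e | [e | e]]; rewrite e; auto.
  - intros [h | h]; [apply setmul_incl_l | apply setmul_incl_r]; assumption.
Qed.

Lemma product_union w z :
  Forall (fun X => X one) w -> (product w z <-> z = one \/ exists A, In A w /\ A z).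
Proof.
  intro hw; revert z; induction hw as [| X w hX _ IH]; intro z; simpl.
  - split; [auto | intros [h | (A & [] & _)]; exact h].
  - rewrite setmul_union, IH; [| exact hX | apply IH; left; reflexivity].
    split.
    + intros [h | [h | (A & hA & h)]]; [right; exists X | left | right; exists A]; auto.
    + intros [-> | (A & [<- | hA] & h)]; [right; left | left | right; right; exists A]; auto.
Qed.

Lemma divides_of_incl X Y : PF X -> PF Y -> (forall z, X z -> Y z) -> divides X Y.
Proof.
  intros hX hY hXY. exists S1, Y. split; [apply Pfin1_one | split; [exact hY |]].
  rewrite setmul_1l. apply set_ext; intro z.
  rewrite (setmul_union _ _ _ (proj2 hX) (proj2 hY)). split; [auto | intros [h | h]; auto].
Qed.

Lemma properly_divides_of_incl X Y : PF X -> PF Y -> (forall z, X z -> Y z) ->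
  (exists z, Y z /\ ~ X z) -> properly_divides X Y.
Proof.
  intros hX hY hXY (z & hz & hnz). split; [apply divides_of_incl; assumption |].
  intro h. apply hnz, (divides_incl h), hz.
Qed.

Lemma irreducible_pairE A : irreducible A -> exists x, x <> one /\ A = listset [one; x].
Proof.
  intro hirr. destruct hirr as (hA & hnA & hdec).
  destruct (nonunit_divisor_witness hA hnA) as (x & hx & hx1).
  exists x; split; [exact hx1 |].
  apply set_ext; intro z; split; [| intros [<- | [<- | []]]; [exact (proj2 hA) | exact hx]].
  intro hz. apply NNPP; intro hnz.
  (* Otherwise A = {1,x} ⋅ (A \ {x}) with both factors proper non-unit divisors. *)
  set (R := fun w => A w /\ w <> x).
  assert (hR : PF R).
  { destruct hA as [(l & hl) hA1]. split; [exists l; intros w [hw _]; auto | split; auto]. }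
  assert (hP := Pfin1_listset [x]).
  apply (hdec (listset [one; x]) R hP hR).
  - intro h. apply hx1, (unit_divisor_one h). right; left; reflexivity.
  - intro h. apply hnz; left. symmetry; apply (unit_divisor_one h).
    split; [exact hz | intros ->; apply hnz; right; left; reflexivity].
  - apply properly_divides_of_incl; [exact hP | exact hA | | exists z; auto].
    intros w [<- | [<- | []]]; [exact (proj2 hA) | exact hx].
  - apply properly_divides_of_incl; [exact hR | exact hA | intros w [hw _]; exact hw |].
    exists x; split; [exact hx | intros [_ h]; apply h; reflexivity].
  - apply set_ext; intro w. rewrite setmul_union; [| left; reflexivity | apply hR].
    destruct (classic (w = x)) as [-> | hwx].
    + split; [intros _; left; right; left; reflexivity | intros _; exact hx].
    + split; [intro hw; right; split; assumption |].
      intros [[<- | [<- | []]] | [hw _]]; [exact (proj2 hA) | contradiction | exact hw].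
Qed.

Lemma factorization_incl X a b : is_factorization X a -> is_factorization X b -> incl a b.
Proof.
  intros [ha ea] [hb eb] C hC.
  destruct (irreducible_pairE (proj1 (Forall_forall _ _) ha C hC)) as (x & hx1 & ->).
  assert (hXx : X x).
  { rewrite <- ea. apply product_union; [exact (Forall_impl _ irreducible_one ha) |].
    right; exists (listset [one; x]); split; [exact hC | right; left; reflexivity]. }
  rewrite <- eb in hXx.
  apply product_union in hXx as [h | (D & hD & hDx)];
    [congruence | | exact (Forall_impl _ irreducible_one hb)].
  destruct (irreducible_pairE (proj1 (Forall_forall _ _) hb D hD)) as (y & hy1 & ->).
  destruct hDx as [<- | [<- | []]]; [congruence | exact hD].
Qed.

Lemma minimal_NoDup X a : is_minimal X a -> NoDup a.
Proof.
  intros [[ha ea] hmin]. apply NNPP; intro hnd.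
  destruct (not_NoDup (fun A B => classic (A = B)) hnd) as (A & l1 & l2 & l3 & ->).
  set (b := l1 ++ A :: l2 ++ l3).
  assert (hsub : subword b (l1 ++ A :: l2 ++ A :: l3)).
  { unfold b. rewrite !app_comm_cons, !app_assoc. apply subword_remove. }
  assert (hb : Forall irreducible b) by exact (incl_Forall (subword_incl hsub) ha).
  apply hmin. exists b. split; [split; [exact hb |] | split].
  - rewrite <- ea. apply set_ext; intro z.
    rewrite !product_union by (apply (Forall_impl _ irreducible_one); assumption).
    enough (hin : forall C, In C (l1 ++ A :: l2 ++ A :: l3) <-> In C b) by
      (setoid_rewrite hin; reflexivity).
    intro C; unfold b; rewrite !in_app_iff; simpl; rewrite !in_app_iff; simpl; tauto.
  - apply wleE. exists (l1 ++ A :: l2 ++ A :: l3). split; [reflexivity | exact hsub].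
  - intro h. apply wle_length in h. unfold b in h.
    repeat (rewrite length_app in h; simpl in h). lia.
Qed.

Lemma factorization_of_list X l :
  exists w, Forall irreducible w /\ forall z, product w z <-> z = one \/ (In z l /\ X z).
Proof.
  induction l as [| x l IH].
  - exists []. split; [constructor |]. intro z; simpl. unfold set_one. tauto.
  - destruct IH as (w & hw & hz).
    assert (hw1 : product w one) by (apply hz; left; reflexivity).
    destruct (classic (X x /\ x <> one)) as [[hx hx1] | hn].
    + exists (listset [one; x] :: w).
      split; [constructor; [apply irreducible_pair |]; assumption |].
      intro z; simpl. rewrite setmul_union, hz; [| left; reflexivity | exact hw1].
      split.
      * intros [[<- | [<- | []]] | [-> | [hzl hXz]]]; auto.
      * intros [-> | [[<- | hzl] hXz]]; [auto | left; right; left; reflexivity | auto].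
    + exists w. split; [exact hw |]. intro z; simpl. rewrite hz.
      split; [intros [-> | [hzl hXz]]; auto |].
      intros [-> | [[<- | hzl] hXz]]; auto.
      left. apply NNPP; intro hz1. apply hn; auto.
Qed.

Lemma factorization_exists X : PF X -> exists w, is_factorization X w.
Proof.
  intros [(l & hl) hX1]. destruct (factorization_of_list X l) as (w & hw & hz).
  exists w. split; [exact hw |]. apply set_ext; intro z. rewrite hz.
  split; [intros [-> | [_ h]]; assumption | intro h; right; auto].
Qed.

Lemma Pfin1_UmF_of_trivial_products : Pfin1_UmF mul one.
Proof.
  split.
  - intros X hX _. exact (factorization_exists hX).
  - intros X a b _ ha hb.
    assert (hp : Permutation a b).
    { apply NoDup_Permutation; [exact (minimal_NoDup ha) | exact (minimal_NoDup hb) |].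
      intro A; split; apply factorization_incl with X; apply ha || apply hb. }
    split; apply Permutation_wle; [exact hp | apply Permutation_sym, hp].
Qed.
End SetProductIsUnion.

Lemma proper_divisor_of_triple a b S :
  PF S -> ~ unit_div S -> properly_divides S (listset [one; a; b]) ->
  exists s, (s = a \/ s = b) /\ S s /\ forall z, S z -> z = one \/ z = s.
Proof.
  intros hS hnS hp.
  destruct (properly_divides_witness hp) as [hsub (m & hm & hnm)].
  destruct (nonunit_divisor_witness hS hnS) as (s & hs & hs1).
  exists s. split; [| split; [exact hs |]].
  - destruct (hsub s hs) as [e | [e | [e | []]]]; [congruence | left | right]; auto.
  - intros z hz.
    assert (hm1 : m <> one) by (intros ->; exact (hnm (proj2 hS))).
    destruct hm as [e | [<- | [<- | []]]]; [congruence | |];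
      destruct (hsub s hs) as [<- | [<- | [<- | []]]]; try congruence; try contradiction;
      destruct (hsub z hz) as [<- | [<- | [<- | []]]]; auto; contradiction.
Qed.

Lemma irreducible_triple a b :
  a <> one -> b <> one -> a <> b -> ~ listset [one; a; b] (mul a b) ->
  mul a a <> b -> mul b b <> a -> irreducible (listset [one; a; b]).
Proof.
  intros ha1 hb1 hne hab haa hbb. split; [apply Pfin1_listset | split].
  - intro h. apply ha1, (unit_divisor_one h). right; left; reflexivity.
  - intros S U hS hU hnS hnU hpS hpU e.
    destruct (proper_divisor_of_triple hS hnS hpS) as (s & hs & hSs & hS2).
    destruct (proper_divisor_of_triple hU hnU hpU) as (u & hu & hUu & hU2).
    assert (hfactor : forall z, listset [one; a; b] z ->
      exists x y, (x = one \/ x = s) /\ (y = one \/ y = u) /\ z = mul x y).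
    { intros z hz. rewrite e in hz. destruct hz as (x & y & hx & hy & ->).
      exists x, y. split; [apply hS2, hx | split; [apply hU2, hy | reflexivity]]. }
    destruct hs as [-> | ->], hu as [-> | ->].
    + destruct (hfactor b) as (x & y & [-> | ->] & [-> | ->] & hb);
        [right; right; left; reflexivity | ..]; rewrite ?mul1, ?mulr1 in hb; congruence.
    + apply hab. rewrite e. exists a, b; auto.
    + apply hab. rewrite e, mulC. exists b, a; auto.
    + destruct (hfactor a) as (x & y & [-> | ->] & [-> | ->] & ha);
        [right; left; reflexivity | ..]; rewrite ?mul1, ?mulr1 in ha; congruence.
Qed.

Lemma product_pair_cube c :
  product (repeat (listset [one; c]) 3) = listset [one; c] ⋅ listset [one; mul c c].
Proof.
  simpl. rewrite setmul_1r, !setmul_listset.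
  apply set_ext; intro z; unfold listset; simpl. rewrite !mul1, !mulr1. tauto.
Qed.

Lemma setmul_pair_square c : listset [one; c; mul c c] (mul c (mul c c)) ->
  listset [one; c] ⋅ listset [one; c] = listset [one; c] ⋅ listset [one; mul c c].
Proof.
  intro h3. rewrite !setmul_listset.
  apply set_ext; intro z; unfold listset; simpl. rewrite !mul1, !mulr1.
  destruct h3 as [e | [e | [e | []]]]; rewrite <- e; tauto.
Qed.

Lemma setmul_pair_pair a b :
  mul a a = one \/ mul a a = a -> mul b b = one \/ mul b b = b ->
  listset [one; a] ⋅ listset [one; b] = listset [one; a; b] ⋅ listset [one; mul a b].
Proof.
  intros ha hb.
  assert (eaab : mul a (mul a b) = b \/ mul a (mul a b) = mul a b).
  { rewrite mulA. destruct ha as [-> | ->]; [left; apply mul1 | right; reflexivity]. }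
  assert (ebab : mul b (mul a b) = a \/ mul b (mul a b) = mul a b).
  { rewrite (mulC a b), mulA. destruct hb as [-> | ->]; [left; apply mul1 | right; reflexivity]. }
  rewrite !setmul_listset. apply set_ext; intro z; unfold listset; simpl.
  rewrite !mul1, !mulr1. destruct eaab as [-> | ->], ebab as [-> | ->]; tauto.
Qed.

Section UniqueFactorization.
Hypothesis uniq : forall X a b, PF X -> is_minimal X a -> is_minimal X b ->
  wequiv PF (setmul mul) a b.

Lemma minimal_wle X a b : is_minimal X a -> is_minimal X b -> a ⊑ b.
Proof.
  intros ha hb.
  assert (hX : PF X).
  { destruct ha as [[hirr <-] _]. apply Pfin1_product.
    exact (Forall_impl _ (fun A (hA : irreducible A) => proj1 hA) hirr). }
  exact (proj1 (uniq hX ha hb)).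
Qed.

Lemma minimal_pair_incl X A B C D :
  is_minimal X [A; B] -> is_minimal X [C; D] -> incl [C; D] [A; B].
Proof.
  intros hAB hCD E hE.
  exact (Permutation_in E (wle_eq_length (minimal_wle hCD hAB) eq_refl) hE).
Qed.

Lemma minimal_pair_square c : ~ (mul c c = one \/ mul c c = c) ->
  is_minimal (listset [one; c] ⋅ listset [one; mul c c])
    [listset [one; c]; listset [one; mul c c]].
Proof.
  intro hc.
  assert (hc1 : c <> one) by (intros ->; apply hc; left; apply mul1).
  apply minimal_factorization2;
    [apply irreducible_pair, hc1 | apply irreducible_pair; intro e; apply hc; left; exact e | |].
  - exists (mul c c). split; [apply setmul_incl_r; [left | right; left]; reflexivity |].
    intros [e | [e | []]]; apply hc; [left | right]; symmetry; exact e.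
  - exists c. split; [apply setmul_incl_l; [left | right; left]; reflexivity |].
    intros [e | [e | []]]; [apply hc1 | apply hc; right]; [symmetry |]; exact e.
Qed.

Lemma cube_absorbed c : ~ (mul c c = one \/ mul c c = c) ->
  listset [one; c; mul c c] (mul c (mul c c)).
Proof.
  intro hc. apply NNPP; intro h3.
  assert (hP : irreducible (listset [one; c])).
  { apply irreducible_pair. intros ->. apply hc; left; apply mul1. }
  assert (hPPP : is_minimal (listset [one; c] ⋅ listset [one; mul c c])
                   (repeat (listset [one; c]) 3)).
  { rewrite <- product_pair_cube. apply minimal_factorization_repeat; [exact hP |].
    exists (mul c (mul c c)). split.
    - rewrite product_pair_cube. exists c, (mul c c).
      split; [right; left | split; [right; left |]]; reflexivity.
    - simpl. rewrite setmul_1r, setmul_listset. unfold listset in *; simpl in *.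
      rewrite !mul1, !mulr1. tauto. }
  pose proof (wle_length (minimal_wle hPPP (minimal_pair_square hc))) as hl.
  simpl in hl; lia.
Qed.

Lemma squares_trivial c : mul c c = one \/ mul c c = c.
Proof.
  apply NNPP; intro hc.
  assert (hc1 : c <> one) by (intros ->; apply hc; left; apply mul1).
  assert (hnP : ~ listset [one; c] (mul c c))
    by (intros [e | [e | []]]; apply hc; [left | right]; symmetry; exact e).
  assert (hPP : is_minimal (listset [one; c] ⋅ listset [one; mul c c])
                  [listset [one; c]; listset [one; c]]).
  { rewrite <- (setmul_pair_square (cube_absorbed hc)).
    apply minimal_factorization2; [apply irreducible_pair, hc1 .. | |];
      exists (mul c c); (split; [| exact hnP]);
      exists c, c; (split; [right; left | split; [right; left |]]); reflexivity. }
  apply hnP.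
  destruct (minimal_pair_incl hPP (minimal_pair_square hc) (or_intror (or_introl eq_refl)))
    as [e | [e | []]]; rewrite e; right; left; reflexivity.
Qed.

Lemma products_trivial : trivial_products mul one.
Proof.
  intros a b. apply NNPP; intro hab.
  assert (ha1 : a <> one) by (intros ->; apply hab; right; right; apply mul1).
  assert (hb1 : b <> one) by (intros ->; apply hab; right; left; apply mulr1).
  assert (hne : a <> b) by (intros <-; apply hab; destruct (squares_trivial a); auto).
  assert (hab1 : mul a b <> one) by (intro e; apply hab; left; exact e).
  assert (hnT : ~ listset [one; a; b] (mul a b))
    by (intros [e | [e | [e | []]]]; apply hab; [left | right; left | right; right];
        symmetry; exact e).
  assert (hAB : is_minimal (listset [one; a] ⋅ listset [one; b])
                  [listset [one; a]; listset [one; b]]).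
  { apply minimal_factorization2; [apply irreducible_pair; assumption .. | exists b | exists a].
    - split; [apply setmul_incl_r; [left | right; left]; reflexivity |].
      intros [e | [e | []]]; congruence.
    - split; [apply setmul_incl_l; [left | right; left]; reflexivity |].
      intros [e | [e | []]]; congruence. }
  assert (hTC : is_minimal (listset [one; a] ⋅ listset [one; b])
                  [listset [one; a; b]; listset [one; mul a b]]).
  { rewrite (setmul_pair_pair (squares_trivial a) (squares_trivial b)).
    apply minimal_factorization2; [| apply irreducible_pair, hab1 | exists (mul a b) | exists a].
    - apply irreducible_triple; try assumption;
        [destruct (squares_trivial a) as [-> | ->] | destruct (squares_trivial b) as [-> | ->]];
        congruence.
    - split; [apply setmul_incl_r; [left | right; left]; reflexivity | exact hnT].
    - split; [apply setmul_incl_l; [left | right; left]; reflexivity |].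
      intros [e | [e | []]]; [congruence | apply hab; right; left; exact e]. }
  destruct (minimal_pair_incl hAB hTC (or_introl eq_refl)) as [e | [e | []]].
  - assert (hbA : listset [one; a] b) by (rewrite e; right; right; left; reflexivity).
    destruct hbA as [h | [h | []]]; congruence.
  - assert (haB : listset [one; b] a) by (rewrite e; right; left; reflexivity).
    destruct haB as [h | [h | []]]; congruence.
Qed.
End UniqueFactorization.
End CommutativeMonoid.

Theorem theorem4p8 (H : Type) (mul : H -> H -> H) (one : H)
  (mulA : forall x y z, mul x (mul y z) = mul (mul x y) z)
  (mulC : forall x y, mul x y = mul y x)
  (mul1 : forall x, mul one x = x) :
  Pfin1_UmF mul one <->
  (nonunits_subsemigroup mul one /\ nonunits_breakable mul one /\
   units_order_le2 mul one /\ trivial_ideal_extension mul one).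
Proof.
  split.
  - intros [_ huniq].
    pose proof (products_trivial mulA mulC mul1 huniq) as htriv.
    split; [exact (nonunits_subsemigroup_comm mulA) |].
    split; [exact (trivial_products_breakable htriv) |].
    split; [exact (trivial_products_units_le2 mulA mulC mul1 htriv) |].
    exact (trivial_products_ideal_extension mulA mulC mul1 htriv).
  - intros (_ & hbr & hle & htie).
    apply (Pfin1_UmF_of_trivial_products mulC mul1).
    exact (trivial_products_of_structure mulA mulC mul1 hbr hle htie).
Qed.
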